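(* In the standing setup below, if $y\in|\mathcal S|$ is an accumulation point of the sequence $\{X_{\mathcal A,w_i}\mid i\in\mathbb{N}\}$, then $y\in X(\mathcal S,w)$.
   Context: Notation: $\mathcal A\subset\mathbb{R}^d$ finite, affinely spanning $\mathbb{R}^d$; $\Delta^{\mathcal A}=\{z\in\mathbb{R}^{\mathcal A}_{\ge0}\mid\sum z_{\mathbf a}=1\}$ with homogeneous coordinates and $\ell_1$ metric $d$; $\Delta^{\mathcal F}$ the face where $z_{\mathbf a}=0$ for $\mathbf a\notin\mathcal F$. For $w\in\mathbb{R}^{\mathcal A}_>$ and $\mathcal F\subset\mathcal A$, $X_{\mathcal F,w}$ is the closure in $\Delta^{\mathcal F}$ of $\{[w_{\mathbf f}x^{\mathbf f}\mid\mathbf f\in\mathcal F]\mid x\in\mathbb{R}^d_>\}$, $x^{\mathbf a}=\prod_j\exp(\mathbf a_j\log x_j)$. A point $y$ is an accumulation point of $\{X_{\mathcal A,w_i}\}$ if for every $\epsilon>0$ and $N$ there are $i>N$ and $z\in X_{\mathcal A,w_i}$ with $d(y,z)<\epsilon$. For $\lambda\in\mathbb{R}^{\mathcal A}$, $\mathcal S_\lambda$ is the regular subdivision whose faces are the sets $\{\mathbf a\mid(\mathbf a,\lambda(\mathbf a))\in F\}$, $F$ an upper face (outward normal with positive last coordinate) of $\mathrm{conv}\{(\mathbf a,\lambda(\mathbf a))\}$. The secondary fan $\Sigma_{\mathcal A}$ consists of the closures of the sets $\{\lambda\mid\mathcal S_\lambda=\mathcal S\}$; $\mathcal S_\sigma$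 is the subdivision of the cone $\sigma$. $|\mathcal S|=\bigcup_{\mathcal F\text{ face of }\mathcal S}\Delta^{\mathcal F}$ and $X(\mathcal S,w)=\bigcup_{\mathcal F\text{ face of }\mathcal S}X_{\mathcal F,w}$. A sequence in a cone $\tau$ is $\sigma$-bounded if $\{\psi(v_i)\}$ is bounded for every linear $\psi$ vanishing on the face $\sigma$. Standing setup: $\{w_i\}\subset\mathbb{R}^{\mathcal A}_>$, $v_i=\mathrm{Log}(w_i)$; there is a cone $\tau\in\Sigma_{\mathcal A}$ containing all $v_i$ with only finitely many $v_i$ in any proper face of $\tau$; a face $\sigma$ of $\tau$ is the minimum face of boundedness (smallest face for which the sequence is bounded) of every subsequence of $\{v_i\}$; $v_i=u_i+\bar v_i$ with $u_i\in\sigma$, $\bar v_i\to v$; $w=\mathrm{Exp}(v)$; $\mathcal S=\mathcal S_\sigma$. *)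

From Stdlib Require Import Reals.
Open Scope R_scope.

(* Conventions: the point configuration A has n points indexed by a < n,
   point a has coordinates (pt a j), j < d.  Vectors of R^A are functions
   nat -> R of which only indices a < n matter.  Subsets F of A are
   boolean predicates on indices (only a < n matter). *)

Fixpoint fsum (n : nat) (f : nat -> R) : R :=
  match n with O => 0 | S k => fsum k f + f k end.

Definition distinct_points (n d : nat) (pt : nat -> nat -> R) : Prop :=
  forall a b, (a < n)%nat -> (b < n)%nat ->
    (forall j, (j < d)%nat -> pt a j = pt b j) -> a = b.

Definition affinely_spanning (n d : nat) (pt : nat -> nat -> R) : Prop :=
  forall x : nat -> R, exists c : nat -> R,
    fsum n c = 1 /\
    forall j, (j < d)%nat -> fsum n (fun a => c a * pt a j) = x j.

Definition dist1 (n : nat) (y z : nat -> R) : R :=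
  fsum n (fun a => Rabs (y a - z a)).

Definition in_simplex_face (n : nat) (F : nat -> bool) (z : nat -> R) : Prop :=
  (forall a, (a < n)%nat -> 0 <= z a) /\
  (forall a, (a < n)%nat -> F a = false -> z a = 0) /\
  fsum n z = 1.

Definition allA : nat -> bool := fun _ => true.

Definition monomial (d : nat) (pt : nat -> nat -> R) (x : nat -> R) (a : nat) : R :=
  exp (fsum d (fun j => pt a j * ln (x j))).

(* the point [w_f x^f | f in F] in homogeneous coordinates *)
Definition mono_point (n d : nat) (pt : nat -> nat -> R) (F : nat -> bool)
    (w x : nat -> R) : nat -> R :=
  let q := fun a => if F a then w a * monomial d pt x a else 0 in
  fun a => q a / fsum n q.

(* X_{F,w}: closure in Delta^F of the image of the positive torus *)
Definition Xset (n d : nat) (pt : nat -> nat -> R) (F : nat -> bool)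
    (w : nat -> R) (y : nat -> R) : Prop :=
  in_simplex_face n F y /\
  forall eps, 0 < eps -> exists x : nat -> R,
    (forall j, (j < d)%nat -> 0 < x j) /\
    dist1 n y (mono_point n d pt F w x) < eps.

(* F is a face of the regular subdivision S_lam: F = {a | (a, lam a) in G}
   for an upper face G of conv{(a, lam a)}, i.e. G maximizes the linear
   functional with normal (c, t), t > 0, over the lifted points. *)
Definition lin_lift (d : nat) (pt : nat -> nat -> R) (lam c : nat -> R) (t : R)
    (a : nat) : R :=
  fsum d (fun j => c j * pt a j) + t * lam a.

Definition subdiv_face (n d : nat) (pt : nat -> nat -> R) (lam : nat -> R)
    (F : nat -> bool) : Prop :=
  exists (c : nat -> R) (t : R), 0 < t /\
    forall a, (a < n)%nat ->
      (F a = true <->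
       forall b, (b < n)%nat -> lin_lift d pt lam c t b <= lin_lift d pt lam c t a).

Definition same_subdiv (n d : nat) (pt : nat -> nat -> R) (lam mu : nat -> R) : Prop :=
  forall F : nat -> bool, subdiv_face n d pt lam F <-> subdiv_face n d pt mu F.

Definition closure_RA (n : nat) (P : (nat -> R) -> Prop) (lam : nat -> R) : Prop :=
  forall eps, 0 < eps -> exists mu, P mu /\ dist1 n lam mu < eps.

(* the cone of the secondary fan associated with S_lam0:
   closure of {lam | S_lam = S_lam0} *)
Definition sec_cone (n d : nat) (pt : nat -> nat -> R) (lam0 : nat -> R) :
    (nat -> R) -> Prop :=
  closure_RA n (fun mu => same_subdiv n d pt mu lam0).

Definition same_set (P Q : (nat -> R) -> Prop) : Prop := forall lam, P lam <-> Q lam.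

Definition in_sec_fan (n d : nat) (pt : nat -> nat -> R) (tau : (nat -> R) -> Prop) : Prop :=
  exists lam0, same_set tau (sec_cone n d pt lam0).

Definition linf (n : nat) (p lam : nat -> R) : R := fsum n (fun a => p a * lam a).

Definition cone_face (n : nat) (tau sigma : (nat -> R) -> Prop) : Prop :=
  exists p : nat -> R,
    (forall lam, tau lam -> 0 <= linf n p lam) /\
    same_set sigma (fun lam => tau lam /\ linf n p lam = 0).

Definition sigma_bounded (n : nat) (sigma : (nat -> R) -> Prop) (v : nat -> nat -> R) : Prop :=
  forall p : nat -> R, (forall lam, sigma lam -> linf n p lam = 0) ->
    exists M, forall i, Rabs (linf n p (v i)) <= M.

Definition min_face_bounded (n : nat) (tau sigma : (nat -> R) -> Prop)
    (v : nat -> nat -> R) : Prop :=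
  cone_face n tau sigma /\ sigma_bounded n sigma v /\
  forall sigma', cone_face n tau sigma' -> sigma_bounded n sigma' v ->
    forall lam, sigma lam -> sigma' lam.

Definition LogV (w : nat -> R) : nat -> R := fun a => ln (w a).
Definition ExpV (v : nat -> R) : nat -> R := fun a => exp (v a).

Definition accum_point (n d : nat) (pt : nat -> nat -> R) (ws : nat -> nat -> R)
    (y : nat -> R) : Prop :=
  forall eps, 0 < eps -> forall N : nat, exists i z,
    (N < i)%nat /\ Xset n d pt allA (ws i) z /\ dist1 n y z < eps.

From Stdlib Require Import Reals Lra Lia.
Open Scope R_scope.

(* Let F be the face of S containing y in its cell Delta^F.
   Fix eps > 0 and a small eta.  Since y is an accumulation point, some
   w_i with i large and some x in the torus give a point
   q = [w_i x^a]_a of X_{A,w_i} that is eta-close to y; for i large,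
   vbar_i is also uniformly close to v.  The cone sigma is the closure of
   {mu | S_mu = S}, so u_i is close to some mu with S_mu = S; hence F is
   a face of S_mu, i.e. the lifted functional a |-> <c,a> + t mu(a) is
   constant (= M) on F.  Twisting the torus point by x_j e^{-c_j/t} turns
   the weights w_i into e^{v}, up to the global factor e^{-M/t} and the
   factors r_a = e^{(v - vbar_i)(a) + (mu - u_i)(a)}, which are close to 1.
   A stability estimate ([restrict_reweight_close]) then shows that
   restricting q to F, multiplying it by factors near 1 and renormalizing
   moves it by at most 6 eta from y.  So y lies in X_{F,e^v}. *)

Lemma fsum_ext n f g :
  (forall a, (a < n)%nat -> f a = g a) -> fsum n f = fsum n g.
Proof.
  induction n as [|n IH]; intros H; simpl; auto.
  rewrite IH, (H n) by (lia || (intros; apply H; lia)). reflexivity.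
Qed.

Lemma fsum_le n f g :
  (forall a, (a < n)%nat -> f a <= g a) -> fsum n f <= fsum n g.
Proof.
  induction n as [|n IH]; intros H; simpl; [lra|].
  pose proof (H n ltac:(lia)). pose proof (IH (fun a Ha => H a ltac:(lia))). lra.
Qed.

Lemma fsum_plus n f g : fsum n (fun a => f a + g a) = fsum n f + fsum n g.
Proof. induction n as [|n IH]; simpl; [lra|]. rewrite IH. ring. Qed.

Lemma fsum_minus n f g : fsum n (fun a => f a - g a) = fsum n f - fsum n g.
Proof. induction n as [|n IH]; simpl; [lra|]. rewrite IH. ring. Qed.

Lemma fsum_mult n c f : fsum n (fun a => c * f a) = c * fsum n f.
Proof. induction n as [|n IH]; simpl; [ring|]. rewrite IH. ring. Qed.

Lemma fsum_zero n : fsum n (fun _ => 0) = 0.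
Proof. induction n as [|n IH]; simpl; [lra|]. rewrite IH. ring. Qed.

Lemma fsum_abs n f : Rabs (fsum n f) <= fsum n (fun a => Rabs (f a)).
Proof.
  induction n as [|n IH]; simpl; [rewrite Rabs_R0; lra|].
  eapply Rle_trans; [apply Rabs_triang | lra].
Qed.

Lemma fsum_nonneg n f : (forall a, (a < n)%nat -> 0 <= f a) -> 0 <= fsum n f.
Proof. intros H. rewrite <- (fsum_zero n). apply fsum_le. auto. Qed.

Lemma fsum_pos n f :
  (0 < n)%nat -> (forall a, (a < n)%nat -> 0 < f a) -> 0 < fsum n f.
Proof.
  destruct n as [|n]; [lia|]. intros _ H. simpl.
  pose proof (H n ltac:(lia)).
  assert (0 <= fsum n f) by (apply fsum_nonneg; intros; left; apply H; lia). lra.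
Qed.

Lemma fsum_term_le n f a :
  (a < n)%nat -> (forall b, (b < n)%nat -> 0 <= f b) -> f a <= fsum n f.
Proof.
  induction n as [|n IH]; intros Ha H; [lia|]. simpl.
  pose proof (H n ltac:(lia)).
  destruct (Nat.eq_dec a n) as [->|Hne].
  - assert (0 <= fsum n f) by (apply fsum_nonneg; intros; apply H; lia). lra.
  - assert (f a <= fsum n f) by (apply IH; [lia | intros; apply H; lia]). lra.
Qed.

Lemma fsum_normalize n f : fsum n f <> 0 -> fsum n (fun a => f a / fsum n f) = 1.
Proof.
  intros H. rewrite (fsum_ext n _ (fun a => / fsum n f * f a)) by (intros; unfold Rdiv; ring).
  rewrite fsum_mult. field. exact H.
Qed.

Lemma simplex_face_nonempty n (F : nat -> bool) y :
  in_simplex_face n F y -> exists a, (a < n)%nat /\ F a = true.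
Proof.
  intros [_ [Hout Hsum]].
  destruct (Classical_Prop.classic (exists a, (a < n)%nat /\ F a = true)) as [|Hno]; auto.
  exfalso.
  assert (fsum n y = fsum n (fun _ => 0)).
  { apply fsum_ext. intros a Ha. apply Hout; auto.
    destruct (F a) eqn:E; auto. exfalso; apply Hno; eauto. }
  rewrite fsum_zero in H. lra.
Qed.

Lemma dist1_triangle n y z w : dist1 n y w <= dist1 n y z + dist1 n z w.
Proof.
  unfold dist1. rewrite <- fsum_plus. apply fsum_le. intros a _.
  replace (y a - w a) with ((y a - z a) + (z a - w a)) by ring. apply Rabs_triang.
Qed.

Lemma uniform_cv n (g : nat -> nat -> R) v :
  (forall a, (a < n)%nat -> Un_cv (fun i => g i a) (v a)) ->
  forall e, 0 < e -> exists N, forall i, (N <= i)%nat ->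
    forall a, (a < n)%nat -> Rabs (g i a - v a) < e.
Proof.
  induction n as [|n IH]; intros H e He; [exists O; intros; lia|].
  destruct (IH (fun a Ha => H a ltac:(lia)) e He) as [N1 HN1].
  destruct (H n ltac:(lia) e He) as [N2 HN2].
  exists (N1 + N2)%nat. intros i Hi a Ha.
  destruct (Nat.eq_dec a n) as [->|]; [apply HN2; lia | apply HN1; lia].
Qed.

Lemma exp_near_one s h : Rabs s <= h -> h <= 1/2 -> Rabs (exp s - 1) <= 2 * h.
Proof.
  intros Hs Hh.
  assert (-h <= s <= h) by (unfold Rabs in Hs; destruct (Rcase_abs s); lra).
  assert (Hlow : forall s, 1 + s <= exp s).
  { intros s'. destruct (Req_dec s' 0) as [->|]; [rewrite exp_0; lra|].
    left. apply exp_ineq1. auto. }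
  pose proof (Hlow s). pose proof (Hlow (- s)).
  assert (exp s * exp (- s) = 1)
    by (rewrite <- exp_plus; replace (s + - s) with 0 by ring; apply exp_0).
  pose proof (exp_pos s). pose proof (exp_pos (- s)).
  assert (exp s * (1 - s) <= 1) by nra.
  apply Rabs_le. split; nra.
Qed.

Section RestrictReweight.

Variables (n : nat) (F : nat -> bool) (y q r : nat -> R) (eta : R).
Hypothesis eta_pos : 0 < eta.
Hypothesis eta_small : eta <= 1/8.
Hypothesis y_face : in_simplex_face n F y.
Hypothesis q_nonneg : forall a, (a < n)%nat -> 0 <= q a.
Hypothesis q_mass : fsum n q = 1.
Hypothesis y_near_q : dist1 n y q < eta.
Hypothesis r_near_one : forall a, (a < n)%nat -> F a = true -> Rabs (r a - 1) <= eta.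

Lemma mass_outside_face :
  fsum n (fun a => if F a then 0 else q a) <= dist1 n y q.
Proof.
  destruct y_face as [_ [Hout _]].
  apply fsum_le. intros a Ha. destruct (F a) eqn:E; [apply Rabs_pos|].
  rewrite (Hout a Ha E), Rabs_minus_sym, Rminus_0_r, Rabs_right; [lra|].
  apply Rle_ge, q_nonneg; auto.
Qed.

Definition reweighted_mass : R := fsum n (fun a => if F a then q a * r a else 0).

Lemma reweighted_mass_near_one : Rabs (reweighted_mass - 1) <= 2 * eta.
Proof.
  set (m := fsum n (fun a => if F a then q a else 0)).
  set (o := fsum n (fun a => if F a then 0 else q a)).
  assert (Hmo : m + o = 1).
  { unfold m, o. rewrite <- fsum_plus, <- q_mass.
    apply fsum_ext. intros; destruct (F a); ring. }
  assert (Ho : o <= eta) by (pose proof mass_outside_face; unfold o; lra).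
  assert (Ho0 : 0 <= o) by (apply fsum_nonneg; intros; destruct (F a); auto; lra).
  assert (Hm0 : 0 <= m) by (apply fsum_nonneg; intros; destruct (F a); auto; lra).
  assert (Hdev : Rabs (reweighted_mass - m) <= eta * m).
  { unfold reweighted_mass, m. rewrite <- fsum_mult, <- fsum_minus.
    eapply Rle_trans; [apply fsum_abs|]. apply fsum_le. intros a Ha.
    pose proof (q_nonneg a Ha).
    destruct (F a) eqn:E.
    - replace (q a * r a - q a) with (q a * (r a - 1)) by ring.
      rewrite Rabs_mult, (Rabs_right (q a)) by lra.
      pose proof (r_near_one a Ha E). nra.
    - rewrite Rminus_0_r, Rabs_R0. lra. }
  apply Rabs_le.
  assert (- (eta * m) <= reweighted_mass - m <= eta * m)
    by (unfold Rabs in Hdev; destruct Rcase_abs in Hdev; lra).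
  split; nra.
Qed.

Lemma restrict_reweight_pointwise P K a :
  0 < K -> (a < n)%nat -> P a = (if F a then K * (q a * r a) else 0) ->
  fsum n P = K * reweighted_mass ->
  Rabs (y a - P a / fsum n P) <= 2 * Rabs (y a - q a) + 4 * eta * q a.
Proof.
  intros HK Ha HPa HPsum. set (D := reweighted_mass) in *.
  pose proof reweighted_mass_near_one as HD1. fold D in HD1.
  assert (HD : 3/4 <= D) by (unfold Rabs in HD1; destruct Rcase_abs in HD1; lra).
  pose proof (q_nonneg a Ha). pose proof (Rabs_pos (y a - q a)).
  rewrite HPsum, HPa. destruct (F a) eqn:E.
  - replace (y a - K * (q a * r a) / (K * D)) with ((y a - q a) + q a * (D - r a) / D)
      by (field; lra).
    assert (Hrel : Rabs (q a * (D - r a) / D) <= 4 * eta * q a).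
    { pose proof (r_near_one a Ha E).
      assert (Rabs (D - r a) <= 3 * eta).
      { replace (D - r a) with ((D - 1) - (r a - 1)) by ring.
        unfold Rminus at 1. eapply Rle_trans; [apply Rabs_triang|]. rewrite Rabs_Ropp. lra. }
      unfold Rdiv. rewrite !Rabs_mult, Rabs_inv, (Rabs_right (q a)), (Rabs_right D) by lra.
      apply (Rmult_le_reg_r D); [lra|].
      replace (q a * Rabs (D - r a) * / D * D) with (q a * Rabs (D - r a)) by (field; lra).
      assert (q a * Rabs (D - r a) <= q a * (3 * eta)) by (apply Rmult_le_compat_l; lra).
      assert (0 <= q a * eta * (4 * D - 3)) by (apply Rmult_le_pos; [apply Rmult_le_pos|]; lra).
      lra. }
    eapply Rle_trans; [apply Rabs_triang | lra].
  - destruct y_face as [_ [Hout _]].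
    rewrite (Hout a Ha E). unfold Rdiv. rewrite Rmult_0_l, Rminus_0_r, Rabs_R0.
    pose proof (Rabs_pos (0 - q a)). nra.
Qed.

Lemma restrict_reweight_close P K :
  0 < K ->
  (forall a, (a < n)%nat -> P a = if F a then K * (q a * r a) else 0) ->
  dist1 n y (fun a => P a / fsum n P) <= 6 * eta.
Proof.
  intros HK HP.
  assert (HPsum : fsum n P = K * reweighted_mass).
  { unfold reweighted_mass. rewrite <- fsum_mult.
    apply fsum_ext. intros a Ha. rewrite HP by auto. destruct (F a); ring. }
  unfold dist1.
  eapply Rle_trans.
  { apply fsum_le. intros a Ha. exact (restrict_reweight_pointwise P K a HK Ha (HP a Ha) HPsum). }
  rewrite fsum_plus, !fsum_mult, q_mass. unfold dist1 in y_near_q. lra.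
Qed.

End RestrictReweight.

Lemma lift_constant_on_face n d pt mu c t (F : nat -> bool) a0 :
  (forall a, (a < n)%nat ->
     (F a = true <-> forall b, (b < n)%nat -> lin_lift d pt mu c t b <= lin_lift d pt mu c t a)) ->
  (a0 < n)%nat -> F a0 = true ->
  forall a, (a < n)%nat -> F a = true -> lin_lift d pt mu c t a = lin_lift d pt mu c t a0.
Proof.
  intros Hface Ha0 Fa0 a Ha Fa.
  pose proof (proj1 (Hface a Ha) Fa a0 Ha0).
  pose proof (proj1 (Hface a0 Ha0) Fa0 a Ha). lra.
Qed.

Lemma monomial_twist d pt x c t a :
  t <> 0 -> (forall j, (j < d)%nat -> 0 < x j) ->
  monomial d pt (fun j => x j * exp (- c j / t)) a
  = monomial d pt x a * exp (- fsum d (fun j => c j * pt a j) / t).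
Proof.
  intros Ht Hx. unfold monomial. rewrite <- exp_plus. f_equal.
  rewrite (fsum_ext d _ (fun j => pt a j * ln (x j) + (- / t) * (c j * pt a j))).
  - rewrite fsum_plus, fsum_mult. field. exact Ht.
  - intros j Hj. rewrite ln_mult, ln_exp by (auto; apply exp_pos). field. exact Ht.
Qed.

Lemma twisted_point_close n d pt (F : nat -> bool) y w ub vb v mu c t x eta :
  0 < eta -> eta <= 1/8 -> in_simplex_face n F y ->
  (forall a, (a < n)%nat -> 0 < w a) ->
  (forall a, (a < n)%nat -> ln (w a) = ub a + vb a) ->
  0 < t ->
  (forall a, (a < n)%nat ->
     (F a = true <-> forall b, (b < n)%nat -> lin_lift d pt mu c t b <= lin_lift d pt mu c t a)) ->
  (forall j, (j < d)%nat -> 0 < x j) ->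
  dist1 n y (mono_point n d pt allA w x) < eta ->
  (forall a, (a < n)%nat -> F a = true ->
     Rabs (vb a - v a) <= eta / 4 /\ Rabs (ub a - mu a) <= eta / 4) ->
  dist1 n y (mono_point n d pt F (ExpV v) (fun j => x j * exp (- c j / t))) <= 6 * eta.
Proof.
  intros He He8 HyF Hw Hlog Ht Hface Hx Hyq Hclose.
  destruct (simplex_face_nonempty n F y HyF) as [a0 [Ha0 Fa0]].
  set (M := lin_lift d pt mu c t a0).
  set (Q := fun a => w a * monomial d pt x a).
  set (Sq := fsum n Q).
  assert (HQ : forall a, (a < n)%nat -> 0 < Q a)
    by (intros a Ha; apply Rmult_lt_0_compat; [auto | apply exp_pos]).
  assert (HSq : 0 < Sq) by (apply fsum_pos; [lia | auto]).
  set (r := fun a => exp ((v a - vb a) + (mu a - ub a))).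
  apply (restrict_reweight_close n F y (fun a => Q a / Sq) r eta He He8 HyF)
    with (K := exp (- M / t) * Sq).
  - intros a Ha. left. apply Rdiv_lt_0_compat; auto.
  - apply fsum_normalize. fold Sq. lra.
  - exact Hyq.
  - intros a Ha Fa. destruct (Hclose a Ha Fa) as [Hv Hu].
    replace eta with (2 * (eta / 2)) by field. apply exp_near_one; [|lra].
    eapply Rle_trans; [apply Rabs_triang|].
    rewrite (Rabs_minus_sym (v a)), (Rabs_minus_sym (mu a)). lra.
  - apply Rmult_lt_0_compat; [apply exp_pos | exact HSq].
  (* on F, e^{v_a} x'^a = e^{-M/t} Sq q_a r_a, since the lift equals M there *)
  - intros a Ha. destruct (F a) eqn:Fa; [|reflexivity].
    pose proof (lift_constant_on_face n d pt mu c t F a0 Hface Ha0 Fa0 a Ha Fa) as HMa.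
    fold M in HMa. unfold lin_lift in HMa.
    unfold ExpV, r, Q. rewrite monomial_twist by (lra || auto).
    replace (fsum d (fun j => c j * pt a j)) with (M - t * mu a) by lra.
    replace (w a) with (exp (ub a + vb a)) by (rewrite <- Hlog, exp_ln; auto).
    replace (exp (- M / t) * Sq * (exp (ub a + vb a) * monomial d pt x a / Sq *
               exp (v a - vb a + (mu a - ub a))))
      with (monomial d pt x a * exp ((- M / t + (ub a + vb a)) + (v a - vb a + (mu a - ub a))))
      by (rewrite !exp_plus; field; lra).
    replace (exp (v a) * (monomial d pt x a * exp (- (M - t * mu a) / t)))
      with (monomial d pt x a * exp (v a + - (M - t * mu a) / t)) by (rewrite exp_plus; ring).
    do 2 f_equal. field. lra.
Qed.

Theorem mainTheorem11
  (n d : nat) (pt : nat -> nat -> R)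
  (Hdist : distinct_points n d pt)
  (Haff : affinely_spanning n d pt)
  (ws : nat -> nat -> R)
  (Hpos : forall i a, (a < n)%nat -> 0 < ws i a)
  (tau : (nat -> R) -> Prop)
  (Htau : in_sec_fan n d pt tau)
  (Hin : forall i, tau (LogV (ws i)))
  (Hproper : forall sigma', cone_face n tau sigma' -> ~ same_set sigma' tau ->
      exists N, forall i, (N <= i)%nat -> ~ sigma' (LogV (ws i)))
  (sigma : (nat -> R) -> Prop)
  (Hmin : forall phi : nat -> nat, (forall i, (phi i < phi (S i))%nat) ->
      min_face_bounded n tau sigma (fun i => LogV (ws (phi i))))
  (u vbar : nat -> nat -> R) (v : nat -> R)
  (Hdec : forall i a, (a < n)%nat -> LogV (ws i) a = u i a + vbar i a)
  (Hu : forall i, sigma (u i))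
  (Hconv : forall a, (a < n)%nat -> Un_cv (fun i => vbar i a) (v a))
  (lamS : nat -> R)
  (HS : same_set sigma (sec_cone n d pt lamS))
  (y : nat -> R)
  (Hy : exists F, subdiv_face n d pt lamS F /\ in_simplex_face n F y)
  (Hacc : accum_point n d pt ws y) :
  exists F, subdiv_face n d pt lamS F /\ Xset n d pt F (ExpV v) y.
Proof.
  destruct Hy as [F [HF HyF]]. exists F. split; [exact HF|]. split; [exact HyF|].
  intros eps Heps.
  set (eta := Rmin (eps / 7) (1 / 8)).
  assert (He : 0 < eta) by (unfold eta; apply Rmin_glb_lt; lra).
  assert (He8 : eta <= 1 / 8) by apply Rmin_r.
  assert (He7 : eta <= eps / 7) by apply Rmin_l.
  destruct (uniform_cv n vbar v Hconv (eta / 4) ltac:(lra)) as [N HN].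
  destruct (Hacc (eta / 2) ltac:(lra) N) as [i [z [Hi [[_ Hz] Hyz]]]].
  destruct (Hz (eta / 2) ltac:(lra)) as [x [Hx Hzx]].
  (* u_i is a limit of functionals mu with S_mu = S, so F is a face of S_mu *)
  destruct (proj1 (HS (u i)) (Hu i) (eta / 4) ltac:(lra)) as [mu [Hmu Hdmu]].
  destruct (proj2 (Hmu F) HF) as [c [t [Ht Hface]]].
  exists (fun j => x j * exp (- c j / t)). split.
  { intros j Hj. apply Rmult_lt_0_compat; [auto | apply exp_pos]. }
  eapply Rle_lt_trans; [|assert (6 * eta < eps) by lra; eassumption].
  apply (twisted_point_close n d pt F y (ws i) (u i) (vbar i) v mu c t x eta); auto.
  - intros a Ha. apply Hdec. exact Ha.
  - eapply Rle_lt_trans; [apply (dist1_triangle n y z) | lra].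
  - intros a Ha _. split; [left; apply HN; auto; lia|].
    eapply Rle_trans; [|left; exact Hdmu].
    apply (fsum_term_le n (fun b => Rabs (u i b - mu b))); auto.
    intros; apply Rabs_pos.
Qed.
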